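(* Let $T>0$, $\xi\in C^{1+\beta}([0,T])$ with $\beta>1/2$, and $f\in C^{1/2}([0,T])$. For $0\le s<t\le T$ let $$K(t,s)=\frac{\xi(t)-\xi(s)}{t-s}\,\frac{e^{-\frac{(\xi(t)-\xi(s))^2}{4(t-s)}}}{(t-s)^{1/2}},$$ and define $g(t)=\int_0^tK(t,s)f(s)\,ds$ for $t\in[0,T]$. Then $g\in C^{1/2}([0,T])$. *)

From HB Require Import structures.
From mathcomp Require Import all_boot all_order all_algebra.
From mathcomp Require Import all_classical all_reals all_analysis.
Set Implicit Arguments. Unset Strict Implicit. Unset Printing Implicit Defensive.
Import Order.TTheory GRing.Theory Num.Theory.
Import numFieldNormedType.Exports.
Local Open Scope classical_set_scope.
Local Open Scope ring_scope.

Definition holder_on {R : realType} (a b alpha : R) (f : R -> R) : Prop :=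
  exists C : R, forall x y : R, a <= x <= b -> a <= y <= b ->
    `|f x - f y| <= C * (`|x - y| `^ alpha).

Definition C1beta {R : realType} (T beta : R) (xi : R -> R) : Prop :=
  {within `[0, T], continuous xi} /\
  exists dxi : R -> R,
    (forall x : R, 0 < x < T -> is_derive x 1 xi (dxi x)) /\
    holder_on 0 T beta dxi.

(* The kernel K(t,s); at s = t it evaluates to 0 (a null set, irrelevant). *)
Definition kernelK {R : realType} (xi : R -> R) (t s : R) : R :=
  (xi t - xi s) / (t - s) *
  (expR (- ((xi t - xi s) ^+ 2 / (4 * (t - s)))) / Num.sqrt (t - s)).

Definition gfun {R : realType} (xi f : R -> R) (t : R) : R :=
  Rintegral (@lebesgue_measure R) `[0, t] (fun s => kernelK xi t s * f s).

(* Write K(t,s) = D(t,s) E(t,s) (t-s)^(-1/2), with D the difference quotient of xi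
   and E the Gaussian factor.  By the mean value theorem |D| <= M, and since xi' is
   beta-Hoelder with beta >= 1/2, D(., s) is 1/2-Hoelder; as exp(-x) is 1-Lipschitz on
   [0, +oo), E(., s) is 1/2-Hoelder as well.  Hence |K(t,s)| <= M (t-s)^(-1/2) and
   |K(t',s) - K(t,s)| <= M ((t-s)^(-1/2) - (t'-s)^(-1/2)) + L (t'-t)^(1/2) (t-s)^(-1/2).
   Splitting g(t') - g(t) into the integral of K(t',.) f over ]t, t'] and the integral
   of (K(t',.) - K(t,.)) f over [0, t[, and integrating the singularity (c-s)^(-1/2)
   explicitly, both pieces are O((t'-t)^(1/2)); f only enters through a bound. *)

From HB Require Import structures.
From mathcomp Require Import all_boot all_order all_algebra.
From mathcomp Require Import all_classical all_reals all_analysis.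
From mathcomp Require Import ring lra.
From mathcomp Require Import measurable_realfun.
Set Implicit Arguments. Unset Strict Implicit. Unset Printing Implicit Defensive.
Import Order.TTheory GRing.Theory Num.Theory.
Import numFieldNormedType.Exports.
Local Open Scope classical_set_scope.
Local Open Scope ring_scope.

Section SqrtSingularity.
Context {R : realType}.
Notation mu := (@lebesgue_measure R).

Definition sqrt_sing (c x : R) := (Num.sqrt (c - x))^-1.

Lemma sqrt_sing_ge0 (c x : R) : 0 <= sqrt_sing c x.
Proof. by rewrite invr_ge0 sqrtr_ge0. Qed.

Lemma continuous_sqrt_sub (c x : R) : {for x, continuous (fun y => Num.sqrt (c - y))}.
Proof.
apply: (@continuous_comp _ _ _ (fun y : R => c - y) Num.sqrt).
  by apply: continuousB; [exact: cst_continuous | exact: cvg_id].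
exact: sqrt_continuous.
Qed.

Lemma sqrt_sing_continuous (c x : R) : x < c -> {for x, continuous (sqrt_sing c)}.
Proof.
move=> xc; apply: continuousV; last exact: continuous_sqrt_sub.
by rewrite gt_eqF // sqrtr_gt0 subr_gt0.
Qed.

Lemma is_derive_sqrt_sing_primitive (c x : R) : x < c ->
  is_derive x 1 (fun y => - (2 * Num.sqrt (c - y))) (sqrt_sing c x).
Proof.
move=> xc.
have dsqrt : is_derive x 1 (Num.sqrt \o (fun y : R => c - y))
    ((2 * Num.sqrt (c - x))^-1 * (0 - 1)).
  by apply: is_derive1_comp => //; apply: is_derive1_sqrt; rewrite subr_gt0.
have -> : (fun y => - (2 * Num.sqrt (c - y))) = (-2) \*: (Num.sqrt \o (fun y : R => c - y)).
  by apply/funext => y /=; rewrite /GRing.scale /= mulNr.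
apply: (is_derive_eq (is_deriveZ (-2) dsqrt)).
have s0 : Num.sqrt (c - x) != 0 by rewrite gt_eqF // sqrtr_gt0 subr_gt0.
by rewrite /GRing.scale /= /sqrt_sing; field.
Qed.

Lemma measurable_fun_itv_cc (a b : R) (g : R -> R) :
  {in `]a, b[, continuous g} -> measurable_fun `[a, b] g.
Proof.
move=> cg.
apply/measurable_fun_itv_bndo_bndcP/measurable_fun_itv_obnd_cbndP.
apply: open_continuous_measurable_fun; first exact: interval_open.
by move=> x /set_mem; apply: cg.
Qed.

Lemma measurable_sqrt_sing (a c : R) : measurable_fun `[a, c] (sqrt_sing c).
Proof.
by apply: measurable_fun_itv_cc => x; rewrite in_itv /= => /andP[_ /sqrt_sing_continuous].
Qed.

Lemma integral_sqrt_sing (a b c : R) : a < b -> b < c ->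
  (\int[mu]_(x in `[a, b]) (sqrt_sing c x)%:E =
   (2 * Num.sqrt (c - a) - 2 * Num.sqrt (c - b))%:E)%E.
Proof.
move=> ab bc.
have ltc x : x <= b -> x < c by move=> xb; exact: le_lt_trans xb bc.
have cprim x : {for x, continuous (fun y => - (2 * Num.sqrt (c - y)))}.
  by apply: continuousN; apply: continuousM;
    [exact: cst_continuous | exact: continuous_sqrt_sub].
rewrite (@continuous_FTC2 _ _ (fun y => - (2 * Num.sqrt (c - y)))) //.
- by rewrite -EFinB; congr EFin; ring.
- apply: continuous_in_subspaceT => x; rewrite inE /= in_itv /= => /andP[_ xb].
  exact/sqrt_sing_continuous/ltc.
- split.
  + move=> x; rewrite in_itv /= => /andP[_ /ltW/ltc xc].
    by case: (is_derive_sqrt_sing_primitive xc).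
  + exact/cvg_at_right_filter/cprim.
  + exact/cvg_at_left_filter/cprim.
- move=> x; rewrite in_itv /= => /andP[_ /ltW/ltc xc].
  by rewrite derive1E; apply: derive_val; exact: is_derive_sqrt_sing_primitive.
Qed.

Lemma integral_sqrt_sing_le (a b : R) : a <= b ->
  (\int[mu]_(x in `[a, b[) (sqrt_sing b x)%:E <= (2 * Num.sqrt (b - a))%:E)%E.
Proof.
rewrite le_eqVlt => /predU1P[<-|ab].
  by rewrite set_itvco0 integral_set0 lee_fin mulr_ge0 // sqrtr_ge0.
have ba0 : 0 < b - a by rewrite subr_gt0.
(* Monotone convergence along the exhaustion of [a, b[ by [a, b - (b - a) / (n + 2)]. *)
pose e n := b - (b - a) / n.+2%:R.
have e_itv n : a < e n < b.
  apply/andP; split; last by rewrite ltrBlDr ltrDl divr_gt0.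
  by rewrite ltrBrDl -ltrBrDr ltr_pdivrMr // ltr_pMr // ltr1n.
pose F n := `[a, e n]%classic.
have FE : `[a, b[%classic = \bigcup_n F n.
  apply/seteqP; split => x /=.
    rewrite in_itv /= => /andP[ax xb].
    have bx0 : 0 < b - x by rewrite subr_gt0.
    exists (Num.truncn ((b - a) / (b - x))) => //=.
    rewrite /F /e /= in_itv /= ax /= lerBrDl -lerBrDr ler_pdivrMr //.
    rewrite -ler_pdivrMl // mulrC.
    by apply: le_trans (ltW (truncnS_gt _)) _; rewrite ler_nat.
  move=> [n _]; rewrite /F /= !in_itv /= => /andP[-> xe] /=.
  by apply: le_lt_trans xe _; case/andP: (e_itv n).
have ndF : nondecreasing_seq F.
  apply/nondecreasing_seqP => n; rewrite subsetEset; apply: subset_itvl.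
  rewrite bnd_simp lerD2l lerN2 ler_pM2l // lef_pV2 ?posrE ?ltr0n //.
  by rewrite ler_nat.
have mF n : measurable (F n) by exact: measurable_itv.
have mfF n : measurable_fun (F n) (fun x => (sqrt_sing b x)%:E).
  apply/measurable_EFinP; apply: (measurable_funS (E := `[a, b]%classic)) => //;
    last exact: measurable_sqrt_sing.
  by apply: subset_itvl; rewrite bnd_simp; case/andP: (e_itv n) => _ /ltW.
have cvgF : (\int[mu]_(x in F i) (sqrt_sing b x)%:E)%E @[i --> \oo] -->
    (\int[mu]_(x in \bigcup_i F i) (sqrt_sing b x)%:E)%E.
  apply: ge0_nondecreasing_set_cvg_integral => // n x _.
  by rewrite lee_fin sqrt_sing_ge0.
rewrite FE -(cvg_lim _ cvgF) //.
apply: lime_le; first by apply/cvg_ex; eexists; exact: cvgF.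
apply: nearW => n; have /andP[ae eb] := e_itv n.
by rewrite integral_sqrt_sing // lee_fin lerBlDr lerDl mulr_ge0 // sqrtr_ge0.
Qed.

Lemma integrable_sqrt_sing (a b : R) : a <= b ->
  mu.-integrable `[a, b] (EFin \o sqrt_sing b).
Proof.
move=> ab; apply/integrableP; split.
  by apply/measurable_EFinP; exact: measurable_sqrt_sing.
under eq_integral do rewrite /= ger0_norm ?sqrt_sing_ge0 //.
rewrite -integral_itv_bndo_bndc; last first.
  apply/measurable_EFinP; apply: (measurable_funS (E := `[a, b]%classic)) => //;
    last exact: measurable_sqrt_sing.
  by apply: subset_itvl; rewrite bnd_simp.
exact: le_lt_trans (integral_sqrt_sing_le ab) (ltry _).
Qed.

Lemma Rintegral_sqrt_sing_le (a b : R) : a <= b ->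
  \int[mu]_(x in `[a, b[) sqrt_sing b x <= 2 * Num.sqrt (b - a).
Proof.
move=> ab; have h := integral_sqrt_sing_le ab.
have h0 : (0 <= \int[mu]_(x in `[a, b[) (sqrt_sing b x)%:E)%E.
  by apply: integral_ge0 => x _; rewrite lee_fin sqrt_sing_ge0.
rewrite -lee_fin fineK // ge0_fin_numE //; exact: le_lt_trans h (ltry _).
Qed.

Lemma Rintegral_sqrt_sing (a b c : R) : a <= b -> b < c ->
  \int[mu]_(x in `[a, b[) sqrt_sing c x = 2 * Num.sqrt (c - a) - 2 * Num.sqrt (c - b).
Proof.
rewrite le_eqVlt => /predU1P[<- _|ab bc].
  by rewrite set_itvco0 Rintegral_set0 subrr.
rewrite Rintegral_itv_bndo_bndc; last first.
  apply: (integrableS _ _ _ (integrable_sqrt_sing (ltW (lt_trans ab bc)))) => //.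
  by apply: subset_itvl; rewrite bnd_simp ltW.
by rewrite /Rintegral integral_sqrt_sing.
Qed.
End SqrtSingularity.

Lemma expRN_lipschitz {R : realType} (x y : R) : 0 <= x -> 0 <= y ->
  `|expR (- x) - expR (- y)| <= `|x - y|.
Proof.
wlog xy : x y / x <= y.
  move=> H x0 y0; have [/H|/ltW yx] := leP x y; first exact.
  by rewrite distrC [`|x - y|]distrC; apply: H.
move=> x0 y0.
have yx : 0 <= y - x by rewrite subr_ge0.
rewrite ger0_norm ?subr_ge0 ?ler_expR ?lerN2 // ler0_norm ?subr_le0 // opprB.
have -> : expR (- y) = expR (- x) * expR (- (y - x)) by rewrite -expRD; congr expR; ring.
have := expR_ge1Dx (- (y - x)).
have : expR (- x) <= 1 by rewrite expR_le1 oppr_le0.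
have := expR_gt0 (- x); have := expR_gt0 (- (y - x)).
nra.
Qed.

Section ProductEstimates.
Context {R : realFieldType}.
Implicit Types D E q M a b u h T : R.

Lemma dist_prod3_le D D' E E' q q' M a b :
  `|D| <= M -> `|D'| <= M -> 0 <= E <= 1 -> 0 <= E' <= 1 -> 0 <= q' <= q ->
  `|D' - D| <= a -> `|E' - E| <= b ->
  `|D' * (E' * q') - D * (E * q)| <= M * (q - q') + (a + M * b) * q.
Proof.
move=> hD hD' /andP[E0 E1] /andP[E'0 E'1] /andP[q'0 q'q] ha hb.
have q0 : 0 <= q by exact: le_trans q'q.
have -> : D' * (E' * q') - D * (E * q) =
  D' * E' * (q' - q) + ((D' - D) * E' + D * (E' - E)) * q by ring.
apply: le_trans (ler_normD _ _) _; apply: lerD.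
  rewrite normrM [`|q' - q|]ler0_norm ?subr_le0 // opprB.
  apply: ler_wpM2r; first by rewrite subr_ge0.
  by rewrite normrM (ger0_norm E'0) -[M]mulr1; apply: ler_pM.
rewrite normrM (ger0_norm q0); apply: ler_wpM2r => //.
apply: le_trans (ler_normD _ _) _; apply: lerD.
  by rewrite normrM (ger0_norm E'0) -[a]mulr1; apply: ler_pM.
by rewrite normrM; apply: ler_pM.
Qed.

Lemma dist_sqr_mul_le D D' u h M T a :
  `|D| <= M -> `|D'| <= M -> 0 <= u -> 0 <= h -> u + h <= T -> `|D' - D| <= a ->
  `|D' ^+ 2 * (u + h) / 4 - D ^+ 2 * u / 4| <= M * T * a + M ^+ 2 * h.
Proof.
move=> hD hD' u0 h0 uT ha.
have M0 : 0 <= M by exact: le_trans (normr_ge0 _) hD.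
have a0 : 0 <= a by exact: le_trans (normr_ge0 _) ha.
have -> : D' ^+ 2 * (u + h) / 4 - D ^+ 2 * u / 4 =
  ((D' - D) * (D' + D) * (u + h) + D ^+ 2 * h) / 4 by field.
rewrite normrM (@ger0_norm _ 4^-1) ?invr_ge0 //.
have hsum : `|D' + D| <= 2 * M by apply: le_trans (ler_normD _ _) _; lra.
have hsq : D ^+ 2 <= M ^+ 2 by rewrite -(real_normK (num_real D)) lerXn2r // nnegrE.
have first_term : `|(D' - D) * (D' + D) * (u + h)| <= 2 * (M * T * a).
  rewrite !normrM (ger0_norm (addr_ge0 u0 h0)).
  have -> : 2 * (M * T * a) = a * (2 * M) * T by ring.
  by apply: ler_pM; rewrite ?mulr_ge0 ?addr_ge0 //; apply: ler_pM.
have second_term : `|D ^+ 2 * h| <= M ^+ 2 * h.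
  by rewrite normrM (ger0_norm h0) (ger0_norm (sqr_ge0 D)); exact: ler_wpM2r.
have := ler_normD ((D' - D) * (D' + D) * (u + h)) (D ^+ 2 * h).
have : 0 <= M ^+ 2 * h by exact: mulr_ge0 (exprn_ge0 _ M0) h0.
have := normr_ge0 ((D' - D) * (D' + D) * (u + h) + D ^+ 2 * h).
lra.
Qed.

End ProductEstimates.

Section KernelAlgebra.
Context {R : realType}.
Implicit Types (xi : R -> R) (s t : R).

Definition diffq xi t s := (xi t - xi s) / (t - s).

Definition gauss_factor xi t s := expR (- ((xi t - xi s) ^+ 2 / (4 * (t - s)))).

Lemma kernelKE xi t s : kernelK xi t s = diffq xi t s * (gauss_factor xi t s * sqrt_sing t s).
Proof. by []. Qed.

Lemma gauss_factor_01 xi t s : s < t -> 0 <= gauss_factor xi t s <= 1.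
Proof.
move=> st; rewrite expR_ge0 /= expR_le1 oppr_le0 divr_ge0 ?sqr_ge0 //.
by rewrite mulr_ge0 // subr_ge0 ltW.
Qed.

Lemma gauss_exponentE xi t s : s < t ->
  (xi t - xi s) ^+ 2 / (4 * (t - s)) = diffq xi t s ^+ 2 * (t - s) / 4.
Proof. by move=> st; rewrite /diffq; field; rewrite subr_eq0 gt_eqF. Qed.

Lemma diffq_sub xi (s t t' : R) : s < t -> t < t' ->
  diffq xi t' s - diffq xi t s = (t' - t) / (t' - s) * (diffq xi t' t - diffq xi t s).
Proof.
move=> st tt'; rewrite /diffq; field.
by rewrite !subr_eq0 !gt_eqF // (lt_trans st tt').
Qed.

Lemma gap_ratio_powR_le (C beta h u T : R) : 0 <= C -> 2^-1 <= beta ->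
  0 < h <= u -> u <= T ->
  h / u * (C * u `^ beta) <= C * T `^ (beta - 2^-1) * Num.sqrt h.
Proof.
move=> C0 hb /andP[h0 hu] uT.
have u0 : 0 < u by exact: lt_le_trans h0 hu.
have su0 : 0 < Num.sqrt u by rewrite sqrtr_gt0.
have shu : Num.sqrt h <= Num.sqrt u by rewrite ler_sqrt // ltW.
have -> : u `^ beta = u `^ (beta - 2^-1) * Num.sqrt u.
  by rewrite -powR12_sqrt ?ltW // -powRD ?subrK // (gt_eqF u0) implybT.
have -> : h / u * (C * (u `^ (beta - 2^-1) * Num.sqrt u)) =
    C * u `^ (beta - 2^-1) * Num.sqrt h * (Num.sqrt h / Num.sqrt u).
  rewrite -{1}(sqr_sqrtr (ltW h0)) -{1}(sqr_sqrtr (ltW u0)).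
  by field; rewrite gt_eqF.
have ratio_le1 : Num.sqrt h / Num.sqrt u <= 1 by rewrite ler_pdivrMr // mul1r.
apply: le_trans (ler_wpM2l _ ratio_le1) _.
  by rewrite !mulr_ge0 ?powR_ge0 ?sqrtr_ge0.
rewrite mulr1; apply: ler_wpM2r; first exact: sqrtr_ge0.
apply: ler_wpM2l => //; apply: ge0_ler_powR; rewrite ?nnegrE ?subr_ge0 //.
  exact: ltW.
exact: ltW (lt_le_trans u0 uT).
Qed.

End KernelAlgebra.

Section KernelEstimates.
Context {R : realType}.
Variables (T Cb beta M : R) (xi dxi : R -> R).
Hypothesis beta_ge : 2^-1 <= beta.
Hypothesis xi_deriv : forall x, 0 < x < T -> is_derive x 1 xi (dxi x).
Hypothesis xi_cont : {within `[0, T], continuous xi}.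
Hypothesis dxi_holder : forall x y, 0 <= x <= T -> 0 <= y <= T ->
  `|dxi x - dxi y| <= Cb * (`|x - y| `^ beta).
Hypothesis dxi_bound : forall x, 0 <= x <= T -> `|dxi x| <= M.

Definition diffq_lip := `|Cb| * T `^ (beta - 2^-1).
Definition kernel_lip := diffq_lip + M * (M * T * diffq_lip + M ^+ 2 * Num.sqrt T).

Lemma diffq_mvt s t : 0 <= s -> s < t -> t <= T ->
  exists2 c, s < c < t & diffq xi t s = dxi c.
Proof.
move=> s0 st tT.
have [c cst E] : exists2 c, c \in `]s, t[ & xi t - xi s = dxi c * (t - s).
  apply: MVT => //.
    move=> x; rewrite in_itv /= => /andP[sx xt]; apply: xi_deriv.
    by rewrite (le_lt_trans s0 sx) (lt_le_trans xt tT).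
  apply: (continuous_subspaceW _ xi_cont) => x /=; rewrite !in_itv /= => /andP[sx xt].
  by rewrite (le_trans s0 sx) (le_trans xt tT).
exists c; first by move: cst; rewrite in_itv.
by rewrite /diffq E mulfK // subr_eq0 gt_eqF.
Qed.

Lemma diffq_bound s t : 0 <= s -> s < t -> t <= T -> `|diffq xi t s| <= M.
Proof.
move=> s0 st tT; have [c /andP[sc ct] ->] := diffq_mvt s0 st tT.
by apply: dxi_bound; rewrite !ltW // ?(le_lt_trans s0 sc) ?(lt_le_trans ct tT).
Qed.

Lemma diffq_holder s t t' : 0 <= s -> s < t -> t < t' -> t' <= T ->
  `|diffq xi t' s - diffq xi t s| <= diffq_lip * Num.sqrt (t' - t).
Proof.
move=> s0 st tt' t'T.
have tT : t <= T by exact: ltW (lt_le_trans tt' t'T).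
have gap : 0 < t' - t <= t' - s by rewrite !subr_gt0 tt' lerD2l lerN2 ltW.
rewrite diffq_sub // normrM ger0_norm; last by rewrite divr_ge0 // ltW ?subr_gt0 // (lt_trans st).
have [c1 /andP[tc1 c1t'] ->] := diffq_mvt (le_trans s0 (ltW st)) tt' t'T.
have [c2 /andP[sc2 c2t] ->] := diffq_mvt s0 st tT.
have dxi_c : `|dxi c1 - dxi c2| <= `|Cb| * (t' - s) `^ beta.
  apply: le_trans (dxi_holder _ _) _.
  - by rewrite !ltW // ?(lt_le_trans c1t' t'T) // (le_lt_trans s0) // (lt_trans st).
  - by rewrite !ltW // ?(lt_le_trans c2t tT) // (le_lt_trans s0).
  apply: le_trans (ler_wpM2r (powR_ge0 _ _) (ler_norm Cb)) _.
  apply: ler_wpM2l => //; apply: ge0_ler_powR; rewrite ?nnegrE.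
  - exact: le_trans beta_ge.
  - exact: normr_ge0.
  - by rewrite subr_ge0 ltW // (lt_trans st).
  - by rewrite ger0_norm; lra.
apply: le_trans (ler_wpM2l _ dxi_c) _.
  by rewrite divr_ge0 // subr_ge0 ltW // (lt_trans st).
apply: gap_ratio_powR_le => //; lra.
Qed.

Lemma kernelK_bound s t : 0 <= s -> s < t -> t <= T ->
  `|kernelK xi t s| <= M * sqrt_sing t s.
Proof.
move=> s0 st tT; rewrite kernelKE normrM.
have /andP[E0 E1] := gauss_factor_01 xi st.
apply: ler_pM => //; first exact: diffq_bound.
rewrite normrM (ger0_norm E0) ger0_norm ?sqrt_sing_ge0 //.
exact: ler_piMl (sqrt_sing_ge0 _ _) E1.
Qed.

Lemma gauss_factor_holder s t t' : 0 <= s -> s < t -> t < t' -> t' <= T ->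
  `|gauss_factor xi t' s - gauss_factor xi t s| <=
  M * T * (diffq_lip * Num.sqrt (t' - t)) + M ^+ 2 * (Num.sqrt T * Num.sqrt (t' - t)).
Proof.
move=> s0 st tt' t'T.
have st' : s < t' by exact: lt_trans st tt'.
have tT : t <= T by exact: ltW (lt_le_trans tt' t'T).
have h0 : 0 <= t' - t by rewrite subr_ge0 ltW.
have t0 : 0 <= t by exact: le_trans s0 (ltW st).
have hT : t' - t <= T by rewrite lerBlDr (le_trans t'T) // lerDl.
have M0 : 0 <= M by exact: le_trans (normr_ge0 _) (diffq_bound s0 st tT).
have h_le : t' - t <= Num.sqrt T * Num.sqrt (t' - t).
  rewrite -{1}(sqr_sqrtr h0) expr2; apply: ler_wpM2r; first exact: sqrtr_ge0.
  by rewrite ler_sqrt // (le_trans t0).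
have expo_ge0 r : s < r -> 0 <= (xi r - xi s) ^+ 2 / (4 * (r - s)).
  by move=> sr; rewrite divr_ge0 ?sqr_ge0 // mulr_ge0 // subr_ge0 ltW.
rewrite /gauss_factor; apply: le_trans (expRN_lipschitz (expo_ge0 _ st') (expo_ge0 _ st)) _.
rewrite !gauss_exponentE // (_ : t' - s = (t - s) + (t' - t)); last by ring.
apply: le_trans (dist_sqr_mul_le (T := T) _ _ _ h0 _ (diffq_holder s0 st tt' t'T)) _.
- exact: diffq_bound s0 st tT.
- exact: diffq_bound s0 st' t'T.
- by rewrite subr_ge0 ltW.
- have -> : t - s + (t' - t) = t' - s by ring.
  by rewrite lerBlDr (le_trans t'T) // lerDl.
by apply: lerD => //; apply: ler_wpM2l => //; exact: exprn_ge0.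
Qed.

Lemma kernelK_holder s t t' : 0 <= s -> s < t -> t < t' -> t' <= T ->
  `|kernelK xi t' s - kernelK xi t s| <=
  M * (sqrt_sing t s - sqrt_sing t' s) + kernel_lip * Num.sqrt (t' - t) * sqrt_sing t s.
Proof.
move=> s0 st tt' t'T.
have st' : s < t' by exact: lt_trans st tt'.
have tT : t <= T by exact: ltW (lt_le_trans tt' t'T).
have sing_anti : 0 <= sqrt_sing t' s <= sqrt_sing t s.
  rewrite sqrt_sing_ge0 /= lef_pV2 ?posrE ?sqrtr_gt0 ?subr_gt0 //.
  rewrite ler_sqrt ?subr_gt0 ?subr_ge0 ?(ltW st') //.
  exact: lerB (ltW tt') (lexx s).
rewrite !kernelKE.
apply: le_trans (dist_prod3_le (diffq_bound s0 st tT) (diffq_bound s0 st' t'T)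
  (gauss_factor_01 xi st) (gauss_factor_01 xi st') sing_anti
  (diffq_holder s0 st tt' t'T) (gauss_factor_holder s0 st tt' t'T)) _.
by rewrite /kernel_lip le_eqVlt; apply/orP; left; apply/eqP; ring.
Qed.

Lemma kernel_lip_ge0 : 0 <= T -> 0 <= M -> 0 <= kernel_lip.
Proof.
move=> T0 M0; have lip0 : 0 <= diffq_lip by rewrite /diffq_lip mulr_ge0 ?powR_ge0.
exact: addr_ge0 lip0 (mulr_ge0 M0 (addr_ge0 (mulr_ge0 (mulr_ge0 M0 T0) lip0)
  (mulr_ge0 (exprn_ge0 _ M0) (sqrtr_ge0 _)))).
Qed.
End KernelEstimates.

Section HolderFacts.
Context {R : realType}.
Variables (T C a : R) (g : R -> R).
Hypothesis g_holder : forall x y : R, 0 <= x <= T -> 0 <= y <= T ->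
  `|g x - g y| <= C * (`|x - y| `^ a).

Lemma holder_bound : 0 <= a -> forall x, 0 <= x <= T -> `|g x| <= `|g 0| + `|C| * T `^ a.
Proof.
move=> a0 x /andP[x0 xT].
have T0 : 0 <= T by exact: le_trans xT.
have -> : g x = g 0 + (g x - g 0) by ring.
apply: le_trans (ler_normD _ _) _; apply: lerD => //.
apply: le_trans (g_holder _ _) _; rewrite ?x0 ?lexx //.
apply: le_trans (ler_wpM2r (powR_ge0 _ _) (ler_norm C)) _.
apply: ler_wpM2l => //; apply: ge0_ler_powR; rewrite ?nnegrE //.
by rewrite subr0 ger0_norm.
Qed.

Lemma holder_continuous x : 0 < a -> 0 < x < T -> {for x, continuous g}.
Proof.
move=> a0 /andP[x0 xT].
apply/cvgrPdist_le => /= e e0.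
pose c := e / (`|C| + 1).
have c0 : 0 < c by rewrite divr_gt0 // ltr_wpDl.
pose d := Num.min (Num.min x (T - x)) (c `^ a^-1).
have d0 : 0 < d by rewrite !lt_min x0 subr_gt0 xT powR_gt0.
apply/nbhs_ballP; exists d => //= y; rewrite /ball /= => hxy.
have yT : 0 <= y <= T.
  have : `|x - y| < x by apply: lt_le_trans hxy _; rewrite /d !ge_min lexx.
  have : `|x - y| < T - x by apply: lt_le_trans hxy _; rewrite /d !ge_min lexx orbT.
  rewrite !ltr_norml => /andP[? ?] /andP[? ?]; apply/andP; split; lra.
have small : `|x - y| `^ a <= c.
  have le_root : `|x - y| <= c `^ a^-1.
    by apply/ltW/(lt_le_trans hxy); rewrite /d ge_min lexx orbT.
  rewrite -[c in _ <= c]powRr1 ?(ltW c0) // -(mulVf (lt0r_neq0 a0)) powRrM.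
  by apply: ge0_ler_powR; rewrite ?nnegrE ?powR_ge0 // ltW.

apply: le_trans (@g_holder x y _ yT) _; first by rewrite !ltW.
apply: le_trans (ler_wpM2r (powR_ge0 _ _) (ler_norm C)) _.
apply: le_trans (ler_wpM2l (normr_ge0 _) small) _.
by rewrite /c mulrA ler_pdivrMr ?ltr_wpDl // mulrC ler_wpM2l ?ltW // ltrDl.
Qed.

End HolderFacts.

Lemma kernelK_continuous {R : realType} (xi : R -> R) (t s : R) :
  s < t -> {for s, continuous xi} -> {for s, continuous (kernelK xi t)}.
Proof.
move=> st cxi.
have cdiff : {for s, continuous (fun y => xi t - xi y)}.
  by apply: continuousB => //; exact: cst_continuous.
have cgap : {for s, continuous (fun y : R => t - y)}.
  by apply: continuousB; [exact: cst_continuous | exact: cvg_id].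
have gap_neq0 : t - s != 0 by rewrite subr_eq0 gt_eqF.
apply: continuousM.
  by apply: continuousM => //; exact: continuousV.
apply: continuousM; last exact: sqrt_sing_continuous.
apply: (@continuous_comp _ _ _ (fun y => - ((xi t - xi y) ^+ 2 / (4 * (t - y)))) expR).
  apply: continuousN; apply: continuousM; first exact: continuousM.
  apply: continuousV; first by rewrite mulf_neq0.
  by apply: continuousM => //; exact: cst_continuous.
exact: continuous_expR.
Qed.

Section IntervalIntegrable.
Context {R : realType}.
Notation mu := (@lebesgue_measure R).
Variable i : interval R.

Lemma integrable_EFinZl (k : R) (g : R -> R) :
  mu.-integrable [set` i] (EFin \o g) -> mu.-integrable [set` i] (EFin \o (fun x => k * g x)).
Proof. by move=> ig; apply: (eq_integrable _ _ _ _ (integrableZl _ k ig)). Qed.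

Lemma integrable_EFinB (g1 g2 : R -> R) :
  mu.-integrable [set` i] (EFin \o g1) -> mu.-integrable [set` i] (EFin \o g2) ->
  mu.-integrable [set` i] (EFin \o (fun x => g1 x - g2 x)).
Proof. by move=> i1 i2; apply: (eq_integrable _ _ _ _ (integrableB _ i1 i2)). Qed.

End IntervalIntegrable.

Section IntegralOperatorHolder.
Context {R : realType}.
Notation mu := (@lebesgue_measure R).
Variables (T M L F0 : R) (xi f : R -> R).
Hypotheses (M_ge0 : 0 <= M) (L_ge0 : 0 <= L) (F0_ge0 : 0 <= F0).
Hypothesis xi_cont : forall x, 0 < x < T -> {for x, continuous xi}.
Hypothesis f_cont : forall x, 0 < x < T -> {for x, continuous f}.
Hypothesis f_bound : forall x, 0 <= x <= T -> `|f x| <= F0.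
Hypothesis K_bound : forall s t, 0 <= s -> s < t -> t <= T ->
  `|kernelK xi t s| <= M * sqrt_sing t s.
Hypothesis K_holder : forall s t t', 0 <= s -> s < t -> t < t' -> t' <= T ->
  `|kernelK xi t' s - kernelK xi t s| <=
  M * (sqrt_sing t s - sqrt_sing t' s) + L * Num.sqrt (t' - t) * sqrt_sing t s.

Let kf t s := kernelK xi t s * f s.

(* At [s = t] both sides are 0, because [x / 0 = 0] in [kernelK] and [sqrt_sing]. *)
Lemma integrand_bound t s : 0 <= s <= t -> t <= T -> `|kf t s| <= M * F0 * sqrt_sing t s.
Proof.
move=> /andP[s0]; rewrite le_eqVlt => /predU1P[<-|st] tT.
  by rewrite /kf /kernelK /sqrt_sing !subrr !mul0r normr0 sqrtr0 invr0 mulr0.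
rewrite normrM mulrAC; apply: ler_pM => //; first exact: K_bound.
by apply: f_bound; rewrite s0 (le_trans (ltW st)).
Qed.

Lemma integrable_integrand t : 0 <= t -> t <= T -> mu.-integrable `[0, t] (EFin \o kf t).
Proof.
move=> t0 tT.
have dom : mu.-integrable `[0, t] (fun x => ((M * F0)%:E * (EFin \o sqrt_sing t) x)%E).
  by apply: integrableZl => //; exact: integrable_sqrt_sing.
apply: (le_integrable _ _ _ dom) => //.
- apply/measurable_EFinP; apply: measurable_fun_itv_cc => s.
  rewrite in_itv /= => /andP[s0 st]; have sT : 0 < s < T by rewrite s0 (lt_le_trans st tT).
  apply: continuousM; last exact: f_cont.
  by apply: kernelK_continuous => //; exact: xi_cont.
- move=> s; rewrite /= in_itv /= => hs; rewrite lee_fin.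
  exact: le_trans (integrand_bound hs tT) (ler_norm _).
Qed.

Lemma gfun_sub_split t t' : 0 <= t -> t < t' -> t' <= T ->
  gfun xi f t' - gfun xi f t =
  \int[mu]_(s in `]t, t']) kf t' s + \int[mu]_(s in `[0, t[) (kf t' s - kf t s).
Proof.
move=> t0 tt' t'T.
have tT : t <= T by exact: ltW (lt_le_trans tt' t'T).
have i' := integrable_integrand (le_trans t0 (ltW tt')) t'T.
have i'0 : mu.-integrable `[0, t] (EFin \o kf t').
  by apply: (integrableS _ _ _ i') => //; apply: subset_itvl; rewrite bnd_simp ltW.
have i0 := integrable_integrand t0 tT.
rewrite /gfun -/(kf t') -/(kf t) Rintegral_itv_bndo_bndc; last first.
  apply: (integrableS _ _ _ (integrable_EFinB i'0 i0)) => //.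
  by apply: subset_itvl; rewrite bnd_simp.
rewrite RintegralB //.
rewrite -(@Rintegral_itvB _ (kf t') (BLeft 0) (BRight t') t i') ?bnd_simp ?(ltW tt') //.
by rewrite addrA subrK.
Qed.

Lemma near_integral_le t t' : 0 <= t -> t < t' -> t' <= T ->
  `|\int[mu]_(s in `]t, t']) kf t' s| <= M * F0 * (2 * Num.sqrt (t' - t)).
Proof.
move=> t0 tt' t'T.
have ik : mu.-integrable `]t, t'] (EFin \o kf t').
  apply: (integrableS _ _ _ (integrable_integrand (le_trans t0 (ltW tt')) t'T)) => //.
  by apply: subset_itvr; rewrite bnd_simp.
have isg : mu.-integrable `[t, t'] (EFin \o sqrt_sing t') by exact/integrable_sqrt_sing/ltW.
have isg_oc : mu.-integrable `]t, t'] (EFin \o sqrt_sing t').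
  by apply: (integrableS _ _ _ isg) => //; apply: subset_itvr; rewrite bnd_simp.
apply: le_trans (le_normr_Rintegral _ ik) _ => //.
apply: le_trans (le_Rintegral _ (integrable_norm ik) (integrable_EFinZl (M * F0) isg_oc) _) _ => //.
  move=> s; rewrite /= in_itv /= => /andP[ts st']; apply: integrand_bound => //.
  by rewrite st' (le_trans t0 (ltW ts)).
rewrite RintegralZl //; apply: ler_wpM2l; first exact: mulr_ge0.
rewrite Rintegral_itv_obnd_cbnd // -Rintegral_itv_bndo_bndc; first exact/Rintegral_sqrt_sing_le/ltW.
by apply: (integrableS _ _ _ isg) => //; apply: subset_itvl; rewrite bnd_simp.
Qed.

Lemma far_integral_le t t' : 0 <= t -> t < t' -> t' <= T ->
  `|\int[mu]_(s in `[0, t[) (kf t' s - kf t s)| <=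
  2 * F0 * (M + L * Num.sqrt T) * Num.sqrt (t' - t).
Proof.
move=> t0 tt' t'T.
have tT : t <= T by exact: ltW (lt_le_trans tt' t'T).
have ik : mu.-integrable `[0, t[ (EFin \o (fun s => kf t' s - kf t s)).
  have ik' : mu.-integrable `[0, t] (EFin \o kf t').
    apply: (integrableS _ _ _ (integrable_integrand (le_trans t0 (ltW tt')) t'T)) => //.
    by apply: subset_itvl; rewrite bnd_simp ltW.
  apply: (integrableS _ _ _ (integrable_EFinB ik' (integrable_integrand t0 tT))) => //.
  by apply: subset_itvl; rewrite bnd_simp.
have isg : mu.-integrable `[0, t[ (EFin \o sqrt_sing t).
  by apply: (integrableS _ _ _ (integrable_sqrt_sing t0)) => //; apply: subset_itvl; rewrite bnd_simp.
have isg' : mu.-integrable `[0, t[ (EFin \o sqrt_sing t').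
  apply: (integrableS _ _ _ (integrable_sqrt_sing (le_trans t0 (ltW tt')))) => //.
  by apply: subset_itvl; rewrite bnd_simp ltW.
pose c1 := F0 * M + F0 * L * Num.sqrt (t' - t).
pose c2 := F0 * M.
have i1 : mu.-integrable `[0, t[ (EFin \o (fun s => c1 * sqrt_sing t s)).
  exact: integrable_EFinZl.
have i2 : mu.-integrable `[0, t[ (EFin \o (fun s => c2 * sqrt_sing t' s)).
  exact: integrable_EFinZl.
have idom : mu.-integrable `[0, t[
    (EFin \o (fun s => c1 * sqrt_sing t s - c2 * sqrt_sing t' s)).
  exact: integrable_EFinB.
apply: le_trans (le_normr_Rintegral _ ik) _ => //.
apply: le_trans (le_Rintegral _ (integrable_norm ik) idom _) _ => //.
  move=> s; rewrite /= in_itv /= => /andP[s0 st].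
  have -> : kf t' s - kf t s = (kernelK xi t' s - kernelK xi t s) * f s by rewrite /kf mulrBl.
  rewrite normrM.
  apply: le_trans (ler_pM (normr_ge0 _) (normr_ge0 _) (K_holder s0 st tt' t'T)
    (f_bound _)) _; first by rewrite s0 (le_trans (ltW st)).
  by rewrite /c1 /c2 le_eqVlt; apply/orP; left; apply/eqP; ring.
rewrite RintegralB // RintegralZl // RintegralZl // (Rintegral_sqrt_sing t0 tt') subr0.
have int_t := Rintegral_sqrt_sing_le t0; rewrite subr0 in int_t.
have c1_ge0 : 0 <= c1 by rewrite /c1 addr_ge0 ?mulr_ge0 ?sqrtr_ge0.
apply: le_trans (lerB (ler_wpM2l c1_ge0 int_t) (lexx _)) _.
have sq_t' : F0 * M * Num.sqrt t <= F0 * M * Num.sqrt t'.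
  by apply: ler_wpM2l; rewrite ?mulr_ge0 // ler_sqrt ?(le_trans t0 (ltW tt')) // ltW.
have sq_T : F0 * L * Num.sqrt (t' - t) * Num.sqrt t <= F0 * L * Num.sqrt (t' - t) * Num.sqrt T.
  by apply: ler_wpM2l; rewrite ?mulr_ge0 ?sqrtr_ge0 // ler_sqrt // (le_trans t0).
rewrite /c1 /c2; lra.
Qed.

Lemma gfun_sub_le t t' : 0 <= t -> t < t' -> t' <= T ->
  `|gfun xi f t' - gfun xi f t| <= 2 * F0 * (2 * M + L * Num.sqrt T) * Num.sqrt (t' - t).
Proof.
move=> t0 tt' t'T; rewrite gfun_sub_split //.
apply: le_trans (ler_normD _ _) _.
apply: le_trans (lerD (near_integral_le t0 tt' t'T) (far_integral_le t0 tt' t'T)) _.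
by rewrite le_eqVlt; apply/orP; left; apply/eqP; ring.
Qed.
End IntegralOperatorHolder.

Lemma holder_on_sqrt {R : realType} (T C : R) (g : R -> R) : 0 <= C ->
  (forall t t', 0 <= t -> t < t' -> t' <= T -> `|g t' - g t| <= C * Num.sqrt (t' - t)) ->
  holder_on 0 T (1 / 2) g.
Proof.
move=> C0 incr; exists C.
suff ordered x y : 0 <= x <= T -> 0 <= y <= T -> x <= y ->
    `|g x - g y| <= C * (`|x - y| `^ (1 / 2)).
  move=> x y hx hy; have [/(ordered _ _ hx hy)//|/ltW yx] := leP x y.
  by rewrite distrC [`|x - y|]distrC; exact: ordered.
move=> /andP[x0 _] /andP[_ yT]; rewrite le_eqVlt => /predU1P[<-|xy].
  by rewrite !subrr normr0 mulr_ge0 // powR_ge0.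
have yx0 : 0 <= y - x by rewrite subr_ge0 ltW.
rewrite distrC [`|x - y|]distrC (ger0_norm yx0) div1r (powR12_sqrt yx0).
exact: incr.
Qed.

Theorem lemma3p14 (R : realType) (T beta : R) (xi f : R -> R) :
  0 < T -> 1 / 2 < beta -> beta <= 1 ->
  C1beta T beta xi ->
  holder_on 0 T (1 / 2) f ->
  holder_on 0 T (1 / 2) (gfun xi f).
Proof.
move=> T0 hb _ [xi_cont [dxi [xi_deriv [Cb dxi_holder]]]] [Cf f_holder].
have beta_ge : 2^-1 <= beta by rewrite -div1r ltW.
have beta_ge0 : 0 <= beta by apply: le_trans beta_ge; rewrite invr_ge0.
have dxi_bound := holder_bound dxi_holder beta_ge0.
have f_bound := holder_bound f_holder (ltac:(by rewrite div1r invr_ge0) : 0 <= 1 / 2 :> R).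
set M := `|dxi 0| + `|Cb| * T `^ beta in dxi_bound.
set F0 := `|f 0| + `|Cf| * T `^ (1 / 2) in f_bound.
have M_ge0 : 0 <= M by rewrite addr_ge0 ?mulr_ge0 ?powR_ge0.
have F0_ge0 : 0 <= F0 by rewrite addr_ge0 ?mulr_ge0 ?powR_ge0.
have L_ge0 := kernel_lip_ge0 Cb beta (ltW T0) M_ge0.
have xi_cont_int x : 0 < x < T -> {for x, continuous xi}.
  by move=> /xi_deriv [dx _]; apply: differentiable_continuous; exact/derivable1_diffP.
have f_cont x : 0 < x < T -> {for x, continuous f}.
  by apply: holder_continuous f_holder x _; rewrite div1r invr_gt0.
apply: (holder_on_sqrt _ (gfun_sub_le M_ge0 L_ge0 F0_ge0 xi_cont_int f_cont f_bound
  (kernelK_bound xi_deriv xi_cont dxi_bound)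
  (kernelK_holder beta_ge xi_deriv xi_cont dxi_holder dxi_bound))).
by apply: mulr_ge0; [apply: mulr_ge0 | apply: addr_ge0; apply: mulr_ge0];
  rewrite ?ler0n ?sqrtr_ge0.
Qed.
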